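(* With $n=2p+1$ agents and complete information, the Majority voting mechanism with Random confirmations (RC mechanism) subgame perfect implements the majority rule: for every preference profile $R$, every subgame-perfect equilibrium yields the outcome $Maj(R)$, and some subgame-perfect equilibrium yields $Maj(R)$.
   Context: Agents $I=\{1,\dots,n\}$, $n=2p+1$, options $A=\{a,b\}$, strict preferences over $A$, commonly known. Majority rule: $Maj(R)=a$ if at least $p+1$ agents prefer $a$, else $b$. Lotteries are compared by stochastic dominance: an agent preferring $x$ weakly (strictly) prefers $\beta$ to $\eta$ iff $\beta(x)\ge\eta(x)$ ($>$). RC mechanism: Voting stage: each agent simultaneously votes $v_i\in A$; the profile $v$ is publicly announced; the option with more votes is the Voting-stage winner. Confirmation stage: a set of $p+1$ agents is drawn uniformly at random and ordered uniformly, $\pi=(\pi_1,\dots,\pi_{p+1})$; sequentially, as long as nobody has announced $Y$, agent $\pi_t$ announces $Y$ or $N$. If some agent announces $Y$ the game ends and the outcome is the Voting-stage winner. If all $p+1$ announce $N$ the outcome is the lottery $\beta(v)$ with $\beta_a(v)=|\{i:v_i=a\}|/n$ and $\beta_b(v)=1-\beta_a(v)$. A subgame-perfect equilibrium is a strategy profile such that at every nonterminal history no agent can obtain a strictly SD-preferred outcome lottery by a unilateral deviation. *)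

From HB Require Import structures.
From mathcomp Require Import all_boot all_order all_algebra.
Set Implicit Arguments. Unset Strict Implicit. Unset Printing Implicit Defensive.
Import Order.TTheory GRing.Theory Num.Theory.
Local Open Scope ring_scope.

Definition alt := bool.
Definition alt_a : alt := true.
Definition alt_b : alt := false.

Definition nag (p : nat) : nat := p.*2.+1.
Notation agent p := 'I_(nag p).

(* A strict preference over A = {a,b} is determined by the preferred option. *)
Definition profile (p : nat) := agent p -> alt.

Definition Maj (p : nat) (R : profile p) : alt :=
  if (p.+1 <= #|[set i | R i == alt_a]|)%N then alt_a else alt_b.

Definition lottery := {ffun alt -> rat}.
Definition pt (x : alt) : lottery := [ffun y => ((y == x)%:R : rat)].

(* Strict SD preference of an agent whose preferred option is x:
   beta strictly preferred to eta iff beta(x) > eta(x). *)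
Definition sd_strict (x : alt) (beta eta : lottery) : Prop := eta x < beta x.

Definition votes (p : nat) := {ffun agent p -> alt}.
Definition nvotes (p : nat) (v : votes p) (x : alt) : nat := #|[set i | v i == x]|.
Definition winner (p : nat) (v : votes p) : alt :=
  if (nvotes v alt_b < nvotes v alt_a)%N then alt_a else alt_b.
Definition beta (p : nat) (v : votes p) : lottery :=
  [ffun y => (nvotes v y)%:R / (nag p)%:R].

(* Orders pi = (pi_1..pi_{p+1}) of p+1 distinct agents; drawing a uniform
   (p+1)-subset and ordering it uniformly = uniform distribution on these. *)
Definition order (p : nat) := (p.+1).-tuple (agent p).
Definition orders (p : nat) : {set order p} := [set s : order p | uniq s].

(* A (pure) strategy of an agent: a vote, and, at each confirmation-stage
   history (v, pi, t) -- votes v, drawn order pi, the first t drawn agents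
   having announced N -- an announcement (true = Y, false = N); it is used
   only when the agent is the mover, i.e. tnth pi t = the agent. *)
Record strategy (p : nat) := Strategy {
  svote : alt;
  sconf : votes p -> order p -> 'I_p.+1 -> bool }.

Definition sprofile (p : nat) := agent p -> strategy p.

Definition deviate (p : nat) (sigma : sprofile p) (i : agent p) (s : strategy p)
  : sprofile p := fun j => if j == i then s else sigma j.

Definition outcome_from (p : nat) (sigma : sprofile p) (v : votes p)
  (pi : order p) (t : 'I_p.+1) : lottery :=
  if [exists s : 'I_p.+1, (t <= s)%N && sconf (sigma (tnth pi s)) v pi s]
  then pt (winner v) else beta v.

Definition outcome_after_vote (p : nat) (sigma : sprofile p) (v : votes p)
  : lottery :=
  [ffun y => (\sum_(pi in orders p) outcome_from sigma v pi ord0 y)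
             / (#|orders p|)%:R].

Definition vote_profile (p : nat) (sigma : sprofile p) : votes p :=
  [ffun i => svote (sigma i)].

Definition outcome (p : nat) (sigma : sprofile p) : lottery :=
  outcome_after_vote sigma (vote_profile sigma).

Definition SPE (p : nat) (R : profile p) (sigma : sprofile p) : Prop :=
  forall (i : agent p) (s : strategy p),
    ~ sd_strict (R i) (outcome (deviate sigma i s)) (outcome sigma) /\
    (forall v : votes p,
       ~ sd_strict (R i) (outcome_after_vote (deviate sigma i s) v)
                         (outcome_after_vote sigma v)) /\
    (forall (v : votes p) (pi : order p) (t : 'I_p.+1), uniq pi ->
       ~ sd_strict (R i) (outcome_from (deviate sigma i s) v pi t)
                         (outcome_from sigma v pi t)).

(* In a subgame-perfect equilibrium a confirmation stage ends with the
   Voting-stage winner whenever the drawn order contains a supporter of it (she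
   would otherwise announce Y), and with beta(v) when it contains none and the
   loser got a vote (the last agent to announce Y would rather announce N).
   Maj(R) has p+1 supporters, so every order of p+1 agents contains one: a vote
   won by Maj(R) yields Maj(R) for sure. A vote won by the other option is not
   an equilibrium: some supporter of Maj(R) voted for the winner, and switching
   her vote weakly raises the probability of Maj(R) for every order and strictly
   for an order made of supporters of Maj(R). Conversely, voting sincerely and
   announcing Y exactly when one prefers the winner is an equilibrium. *)

From Pilot Require Import Defs.
From mathcomp Require Import all_boot all_order all_algebra.
From mathcomp Require Import zify.
Set Implicit Arguments. Unset Strict Implicit. Unset Printing Implicit Defensive.
Import Order.TTheory GRing.Theory Num.Theory.
Local Open Scope ring_scope.

Section RC.
Variable p : nat.
Implicit Types (v : votes p) (sigma : sprofile p) (R : profile p)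
  (pi : Defs.order p) (x : alt).

Definition supporters (f : agent p -> alt) x := [set i | f i == x].

Lemma card_supportersC (f : agent p -> alt) x :
  (#|supporters f x| + #|supporters f (~~ x)|)%N = nag p.
Proof.
have -> : supporters f (~~ x) = ~: supporters f x.
  by apply/setP=> i; rewrite !inE; case: (f i); case: x.
by rewrite cardsC card_ord.
Qed.

Lemma Maj_supporters R : (p < #|supporters R (Maj R)|)%N.
Proof.
have := card_supportersC R alt_a; rewrite /Maj /supporters /nag.
by case: ifP => //= /negbT; rewrite /alt_a /alt_b -leqNgt; lia.
Qed.

Lemma nvotesE v x : nvotes v x = #|supporters v x|.
Proof. by []. Qed.

Lemma winner_eq v x : (winner v == x) = (p < nvotes v x)%N.
Proof.
have := card_supportersC v alt_a; rewrite /winner !nvotesE /nag /alt_a /alt_b.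
by case: x; case: ltnP => /=; lia.
Qed.

Lemma orders_meet (A : {set agent p}) pi :
  (p < #|A|)%N -> uniq pi -> exists s, tnth pi s \in A.
Proof.
move=> ltpA upi; apply/existsP; apply: contraLR ltpA => /existsPn outA.
have : (#|pi| <= #|~: A|)%N.
  by apply/subset_leq_card/subsetP => _ /tnthP [s ->]; rewrite inE outA.
by rewrite (card_uniqP upi) size_tuple cardsCs setCK card_ord /nag -leqNgt; lia.
Qed.

Lemma orders_within (A : {set agent p}) :
  (p < #|A|)%N -> exists2 pi, pi \in orders p & forall s, tnth pi s \in A.
Proof.
move=> ltpA; exists [tuple enum_val (widen_ord ltpA s) | s < p.+1].
  rewrite inE; apply/tuple_uniqP => s1 s2; rewrite !tnth_mktuple.
  by move/enum_val_inj/(congr1 val) => /= /val_inj.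
by move=> s; rewrite tnth_mktuple enum_valP.
Qed.

Lemma orders_gt0 : (0 < #|orders p|)%N.
Proof.
have [|pi0 pi0P _] := @orders_within setT; first by rewrite cardsT card_ord /nag; lia.
by apply/card_gt0P; exists pi0.
Qed.

Lemma ptE x y : pt x y = (y == x)%:R.
Proof. by rewrite ffunE. Qed.

Lemma betaE v x : beta v x = (nvotes v x)%:R / (nag p)%:R.
Proof. by rewrite ffunE. Qed.

Lemma nag_gt0 : 0 < (nag p)%:R :> rat.
Proof. by rewrite ltr0n. Qed.

Lemma ltr_beta v v' x x' :
  (beta v x < beta v' x') = (nvotes v x < nvotes v' x')%N.
Proof. by rewrite !betaE ltr_pM2r ?invr_gt0 ?nag_gt0 // ltr_nat. Qed.

Lemma beta_lt1 v x : (beta v x < 1) = (nvotes v x < nag p)%N.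
Proof. by rewrite betaE ltr_pdivrMr ?nag_gt0 // mul1r ltr_nat. Qed.

Lemma beta_gt0 v x : (0 < beta v x) = (0 < nvotes v x)%N.
Proof. by rewrite betaE pmulr_lgt0 ?invr_gt0 ?nag_gt0 // ltr0n. Qed.

Lemma nvotes_le v x : (nvotes v x <= nag p)%N.
Proof. by rewrite -(card_supportersC v x) leq_addr. Qed.

Lemma beta_ge0 v x : 0 <= beta v x.
Proof. by rewrite betaE divr_ge0 ?ler0n. Qed.

Lemma beta_le1 v x : beta v x <= 1.
Proof. by rewrite betaE ler_pdivrMr ?nag_gt0 // mul1r ler_nat nvotes_le. Qed.

Lemma beta_pt v x : nvotes v x = nag p -> beta v = pt x.
Proof.
move=> allx; apply/ffunP=> y; rewrite betaE ptE.
case: (eqVneq y x) => [->|/negPf nyx]; first by rewrite allx divff ?pnatr_eq0.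
have none : nvotes v (~~ x) = 0%N.
  by have := card_supportersC v x; rewrite -!nvotesE allx; lia.
have -> : y = ~~ x by case: x y nyx {allx none} => [] [].
by rewrite none mul0r.
Qed.

Definition confirmed sigma v pi (t : 'I_p.+1) :=
  [exists s : 'I_p.+1, (t <= s)%N && sconf (sigma (tnth pi s)) v pi s].

Lemma outcome_fromE sigma v pi t :
  outcome_from sigma v pi t =
  if confirmed sigma v pi t then pt (winner v) else beta v.
Proof. by []. Qed.

Lemma outcome_from_ge0 sigma v pi t x : 0 <= outcome_from sigma v pi t x.
Proof. by rewrite outcome_fromE; case: ifP => _; rewrite ?ptE ?beta_ge0. Qed.

Lemma outcome_from_le1 sigma v pi t x : outcome_from sigma v pi t x <= 1.
Proof.
by rewrite outcome_fromE; case: ifP => _; rewrite ?ptE ?beta_le1 ?lern1 ?leq_b1.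
Qed.

Lemma outcome_from_le_beta sigma v pi t x :
  winner v != x -> outcome_from sigma v pi t x <= beta v x.
Proof.
by rewrite outcome_fromE eq_sym => /negPf nxw; case: ifP; rewrite ?ptE ?nxw ?beta_ge0.
Qed.

Lemma outcome_after_voteE sigma v x :
  outcome_after_vote sigma v x =
  (\sum_(pi in orders p) outcome_from sigma v pi ord0 x) / (#|orders p|)%:R.
Proof. by rewrite ffunE. Qed.

Lemma orders_gt0R : 0 < (#|orders p|)%:R :> rat.
Proof. by rewrite ltr0n orders_gt0. Qed.

Lemma outcome_after_vote_const sigma v L :
  (forall pi, uniq pi -> outcome_from sigma v pi ord0 = L) ->
  outcome_after_vote sigma v = L.
Proof.
move=> constL; apply/ffunP=> y; rewrite outcome_after_voteE.
rewrite (eq_bigr (fun _ => L y)); last by move=> pi; rewrite inE => /constL ->.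
by rewrite sumr_const -[_ *+ _]mulr_natr mulfK // gt_eqF ?orders_gt0R.
Qed.

Lemma outcome_after_vote_le1 sigma v x : outcome_after_vote sigma v x <= 1.
Proof.
rewrite outcome_after_voteE ler_pdivrMr ?orders_gt0R // mul1r -sumr_const.
by apply: ler_sum => pi _; apply: outcome_from_le1.
Qed.

Lemma ler_outcome_after_vote sigma sigma' v v' x :
  (forall pi, uniq pi ->
     outcome_from sigma v pi ord0 x <= outcome_from sigma' v' pi ord0 x) ->
  outcome_after_vote sigma v x <= outcome_after_vote sigma' v' x.
Proof.
move=> le_from; rewrite !outcome_after_voteE ler_pM2r ?invr_gt0 ?orders_gt0R //.
by apply: ler_sum => pi; rewrite inE; apply: le_from.
Qed.

Lemma ltr_outcome_after_vote sigma sigma' v v' x pi0 :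
  uniq pi0 ->
  outcome_from sigma v pi0 ord0 x < outcome_from sigma' v' pi0 ord0 x ->
  (forall pi, uniq pi ->
     outcome_from sigma v pi ord0 x <= outcome_from sigma' v' pi ord0 x) ->
  outcome_after_vote sigma v x < outcome_after_vote sigma' v' x.
Proof.
move=> upi0 lt_pi0 le_from.
rewrite !outcome_after_voteE ltr_pM2r ?invr_gt0 ?orders_gt0R //.
rewrite (bigD1 pi0) ?inE // [ltRHS](bigD1 pi0) ?inE //=.
by rewrite ltr_leD // ler_sum // => pi /andP[]; rewrite inE => /le_from.
Qed.

Lemma outcome_after_vote_confirmed sigma v :
  (forall pi, uniq pi -> confirmed sigma v pi ord0) ->
  outcome_after_vote sigma v = pt (winner v).
Proof.
by move=> conf; apply: outcome_after_vote_const => pi /conf; rewrite outcome_fromE => ->.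
Qed.

Lemma alt_neq_negb x y : x != y -> x = ~~ y.
Proof. by case: x; case: y. Qed.

(* Used only in confirmation subgames, where the vote is irrelevant. *)
Definition announcing (c : bool) : strategy p := Strategy alt_a (fun _ _ _ => c).

Lemma supporters_deviate sigma i s :
  supporters (vote_profile (deviate sigma i s)) (svote s) =
  i |: supporters (vote_profile sigma) (svote s).
Proof.
apply/setP=> j; rewrite !inE !ffunE /deviate.
by case: (eqVneq j i) => [->|_]; rewrite ?eqxx.
Qed.

Lemma outcome_after_vote_revote sigma i x v :
  outcome_after_vote (deviate sigma i (Strategy x (sconf (sigma i)))) v =
  outcome_after_vote sigma v.
Proof.
apply/ffunP=> y; rewrite !outcome_after_voteE; congr (_ / _).
apply: eq_bigr => pi _; rewrite !outcome_fromE.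
suff -> : confirmed (deviate sigma i (Strategy x (sconf (sigma i)))) v pi ord0 =
          confirmed sigma v pi ord0 by [].
by apply: eq_existsb => s; rewrite /deviate; case: eqP => // ->.
Qed.

Section Equilibrium.
Variables (R : profile p) (sigma : sprofile p).
Hypothesis spe : SPE R sigma.

Lemma SPE_no_gain_from i s v pi t : uniq pi ->
  ~ outcome_from sigma v pi t (R i) < outcome_from (deviate sigma i s) v pi t (R i).
Proof. by have [_ [_]] := spe i s; apply. Qed.

Lemma SPE_confirms_supporter v pi s0 :
  uniq pi -> R (tnth pi s0) = winner v -> outcome_from sigma v pi ord0 = pt (winner v).
Proof.
move=> upi Rs0; rewrite outcome_fromE; case: ifPn => // /existsPn unconf.
set i := tnth pi s0.
have conf_dev : confirmed (deviate sigma i (announcing true)) v pi s0.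
  by apply/existsP; exists s0; rewrite leqnn /deviate eqxx.
have unconf_s0 : confirmed sigma v pi s0 = false.
  by apply/negbTE/existsPn => s; apply: contra (unconf s) => /andP[_ ->].
have := @SPE_no_gain_from i (announcing true) v pi s0 upi.
rewrite !outcome_fromE conf_dev unconf_s0 Rs0 ptE eqxx => /negP.
rewrite beta_lt1 -leqNgt => all_w.
by apply: beta_pt; apply/eqP; rewrite eqn_leq nvotes_le.
Qed.

Lemma SPE_rejects_without_supporter v pi :
  uniq pi -> (forall s, R (tnth pi s) != winner v) ->
  (0 < nvotes v (~~ winner v))%N -> outcome_from sigma v pi ord0 = beta v.
Proof.
move=> upi nosup loser_votes; rewrite outcome_fromE.
case: ifPn => // /existsP[s0 /andP[_ conf0]].
have [s conf_s last_s] :=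
  @arg_maxnP _ s0 (fun s => sconf (sigma (tnth pi s)) v pi s) val conf0.
set i := tnth pi s.
have conf_from_s : confirmed sigma v pi s.
  by apply/existsP; exists s; rewrite leqnn conf_s.
have unconf_dev : confirmed (deviate sigma i (announcing false)) v pi s = false.
  apply/negbTE/existsPn => s'; apply/andP=> -[le_ss']; rewrite /deviate.
  case: eqP => // /eqP ne_i /last_s le_s's; case/eqP: ne_i; congr tnth.
  by apply/val_inj/eqP; rewrite eqn_leq le_ss' andbT; apply: le_s's.
have := @SPE_no_gain_from i (announcing false) v pi s upi.
rewrite !outcome_fromE conf_from_s unconf_dev ptE (negbTE (nosup s)).
by rewrite (alt_neq_negb (nosup s)) beta_gt0 loser_votes.
Qed.

Lemma SPE_outcome_after_winning_vote v :
  winner v = Maj R -> outcome_after_vote sigma v = pt (Maj R).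
Proof.
move=> wv; rewrite -wv; apply: outcome_after_vote_const => pi upi.
have [s] := orders_meet (Maj_supporters R) upi; rewrite inE => /eqP Rs.
by apply: (SPE_confirms_supporter (s0 := s)); rewrite ?Rs.
Qed.

Lemma SPE_outcome_from_gain v v' pi :
  winner v != Maj R -> (nvotes v (Maj R) < nvotes v' (Maj R))%N -> uniq pi ->
  (forall s, R (tnth pi s) != winner v) ->
  outcome_from sigma v pi ord0 (Maj R) < outcome_from sigma v' pi ord0 (Maj R).
Proof.
move=> wv_ne lt_votes upi nosup.
apply: le_lt_trans (@outcome_from_le_beta sigma v pi ord0 _ wv_ne) _.
case: (eqVneq (winner v') (Maj R)) => [wv'|wv'_ne].
  have [s] := orders_meet (Maj_supporters R) upi; rewrite inE => /eqP Rs.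
  rewrite (SPE_confirms_supporter (s0 := s)) ?Rs ?wv' // ptE eqxx beta_lt1.
  have : (nvotes v (Maj R) <= p)%N by rewrite leqNgt -winner_eq.
  by rewrite /nag; lia.
have same_winner : winner v' = winner v.
  by rewrite (alt_neq_negb wv_ne) (alt_neq_negb wv'_ne).
rewrite SPE_rejects_without_supporter ?same_winner ?ltr_beta //.
by rewrite (alt_neq_negb wv_ne) negbK; lia.
Qed.

Lemma SPE_vote_winner : winner (vote_profile sigma) = Maj R.
Proof.
set v := vote_profile sigma.
case: (eqVneq (winner v) (Maj R)) => // wv_ne; exfalso.
have [i] : exists i, (R i == Maj R) && (v i != Maj R).
  have : ~~ (supporters R (Maj R) \subset supporters v (Maj R)).
    apply: contraL (Maj_supporters R) => /subset_leq_card le_sup.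
    by rewrite -leqNgt (leq_trans le_sup) // -nvotesE leqNgt -winner_eq.
  by case/subsetPn => i; rewrite !inE => Ri vi; exists i; rewrite Ri.
case/andP => /eqP Ri vi.
set s := Strategy (Maj R) (sconf (sigma i)).
have [no_gain _] := spe i s; apply: no_gain.
rewrite /sd_strict /outcome outcome_after_vote_revote -/v Ri.
have lt_votes :
    (nvotes v (Maj R) < nvotes (vote_profile (deviate sigma i s)) (Maj R))%N.
  by rewrite !nvotesE -[Maj R]/(svote s) supporters_deviate cardsU1 inE (negbTE vi).
have [pi0 /[!inE] upi0 all_Maj] := orders_within (Maj_supporters R).
apply: (ltr_outcome_after_vote upi0).
  apply: SPE_outcome_from_gain => // s'.
  by move: (all_Maj s'); rewrite inE => /eqP ->; rewrite eq_sym.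
move=> pi upi; case: (boolP [exists s', R (tnth pi s') == winner v]).
  case/existsP => s' /eqP Rs'; rewrite (SPE_confirms_supporter upi Rs').
  by rewrite ptE eq_sym (negbTE wv_ne) outcome_from_ge0.
by move/existsPn=> nosup; apply/ltW/SPE_outcome_from_gain.
Qed.

Lemma SPE_outcome : outcome sigma = pt (Maj R).
Proof. exact/SPE_outcome_after_winning_vote/SPE_vote_winner. Qed.

End Equilibrium.

Section Sincere.
Variable R : profile p.

Definition sincere : sprofile p :=
  fun j => Strategy (R j) (fun v _ _ => R j == winner v).

Lemma confirmed_sincere v pi t :
  confirmed sincere v pi t =
  [exists s : 'I_p.+1, (t <= s)%N && (R (tnth pi s) == winner v)].
Proof. by []. Qed.

Lemma winner_Maj_supporters v :
  supporters R (Maj R) \subset supporters v (Maj R) -> winner v = Maj R.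
Proof.
move=> /subset_leq_card le_sup; apply/eqP.
by rewrite winner_eq (leq_trans (Maj_supporters R)).
Qed.

Lemma outcome_sincere_supporters sigma :
  (forall j, R j = Maj R -> sigma j = sincere j) -> outcome sigma = pt (Maj R).
Proof.
move=> sincere_sup; set v := vote_profile sigma.
have wv : winner v = Maj R.
  apply/winner_Maj_supporters/subsetP => j; rewrite !inE ffunE => /eqP Rj.
  by rewrite (sincere_sup _ Rj) /= Rj.
rewrite /outcome -wv; apply: outcome_after_vote_confirmed => pi upi.
have [s] := orders_meet (Maj_supporters R) upi; rewrite inE => /eqP Rs.
by apply/existsP; exists s; rewrite sincere_sup //= Rs wv eqxx.
Qed.

Lemma outcome_sincere : outcome sincere = pt (Maj R).
Proof. exact: outcome_sincere_supporters. Qed.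

Lemma sincere_no_gain_from i s v pi t :
  outcome_from (deviate sincere i s) v pi t (R i) <=
  outcome_from sincere v pi t (R i).
Proof.
rewrite [in X in _ <= X]outcome_fromE confirmed_sincere.
case: ifPn => [/existsP[s' /andP[le_ts' /eqP Rs']] | /existsPn nosup].
  case: (eqVneq (R i) (winner v)) => [->|Ri_ne].
    by rewrite ptE eqxx outcome_from_le1.
  rewrite outcome_fromE; suff -> : confirmed (deviate sincere i s) v pi t by [].
  apply/existsP; exists s'; rewrite le_ts' /deviate.
  case: eqP => [si|_]; first by case/eqP: Ri_ne; rewrite -si.
  by rewrite /= Rs' eqxx.
rewrite outcome_fromE; case: ifPn => [/existsP[s' /andP[le_ts' conf']]|_ //].
move: conf' (nosup s'); rewrite le_ts' /deviate.
case: eqP => [<-|_] /=; last by move=> ->.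
by move=> _ /negPf Rw; rewrite ptE Rw beta_ge0.
Qed.

Lemma SPE_sincere : SPE R sincere.
Proof.
move=> i s; split; [|split]; rewrite /sd_strict.
- rewrite outcome_sincere; case: (eqVneq (R i) (Maj R)) => [->|Ri_ne].
    by rewrite ptE eqxx; apply/negP; rewrite -leNgt outcome_after_vote_le1.
  rewrite outcome_sincere_supporters ?ltxx // => j Rj.
  by rewrite /deviate; case: eqP => // ji; case/eqP: Ri_ne; rewrite -ji.
- move=> v; apply/negP; rewrite -leNgt.
  by apply: ler_outcome_after_vote => pi _; apply: sincere_no_gain_from.
- by move=> v pi t _; apply/negP; rewrite -leNgt; apply: sincere_no_gain_from.
Qed.

End Sincere.

End RC.

Theorem proposition2 (p : nat) (R : profile p) :
  (forall sigma : sprofile p, SPE R sigma -> outcome sigma = pt (Maj R)) /\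
  (exists sigma : sprofile p, SPE R sigma /\ outcome sigma = pt (Maj R)).
Proof.
split; first exact: SPE_outcome.
by exists (sincere R); split; [exact: SPE_sincere | exact: outcome_sincere].
Qed.
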